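(* Let $\Lambda$ be a row-finite source-free $k$-graph and let $(X, \mu)$ be a $\sigma$-finite measure space. If a $\Lambda$-projective representation of $C^*(\Lambda)$ on $L^2(X, \mu)$ is monic, then the support of any of its monic vectors $\xi$ differs from $X$ by at most a set of measure $0$.
   Context: A $k$-graph is a countable small category $\Lambda$ with a functor $d:\Lambda\to\mathbb{N}^k$ with unique factorization; row-finite/source-free: the set of paths of each degree with a given range is finite/nonempty. $C^*(\Lambda)$ is the universal $C^*$-algebra of a Cuntz–Krieger $\Lambda$-family. A $\Lambda$-semibranching function system on $(X,\mu)$: measurable $D_\lambda$, prefixing maps $\tau_\lambda:D_\lambda\to X$ with ranges $R_\lambda$, coding maps $\tau^m$ ($m\in\mathbb{N}^k$), such that for each $m$ $\{\tau_\lambda:d(\lambda)=m\}$ is a semibranching function system with coding map $\tau^m$ (finite positive measures, a.e. disjoint ranges covering $X$ a.e., positive Radon–Nikodym derivatives, $\tau^m\circ\tau_\lambda=\mathrm{id}$), $\tau_v=\mathrm{id}$ for vertices, $\tau_\lambda\tau_\nu=\tau_{\lambda\nu}$ a.e., $\tau^m\tau^n=\tau^{m+n}$. A $\Lambda$-projective system adds $f_\lambda\in L^2$ with $0\ne d(\mu\circ\tau_\lambda^{-1})/d\mu=|f_\lambda|^2$ and $f_\lambda(f_\nu\circ\tau^{d(\lambda)})=f_{\lambda\nu}$; the $\Lambda$-projective representation is $T_\lambda f=f_\lambda\cdot(f\circ\tau^{d(\lambda)})$, which satisfies $T_\lambda T_\lambda^*=M_{\chi_{R_\lambda}}$. A representation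 $\{t_\lambda\}$ on $\mathcal H$ is monic if all $t_\lambda\ne0$ and there is $\xi$ (a monic vector) with $\overline{\mathrm{span}}\{t_\lambda t_\lambda^*\xi:\lambda\in\Lambda\}=\mathcal H$. *)

From HB Require Import structures.
From mathcomp Require Import all_boot all_order all_algebra.
From mathcomp Require Import all_classical all_reals all_analysis.
From mathcomp Require Import complex.

Set Implicit Arguments.
Unset Strict Implicit.
Unset Printing Implicit Defensive.
Import Order.TTheory GRing.Theory Num.Theory.
Local Open Scope classical_set_scope.
Local Open Scope ring_scope.

Definition Nk (k : nat) := {ffun 'I_k -> nat}.
Definition Nk0 (k : nat) : Nk k := [ffun=> 0%N].
Definition Nkadd (k : nat) (m n : Nk k) : Nk k := [ffun i => (m i + n i)%N].

Record kgraph (k : nat) := KGraph {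
  kobj : Type;
  kmor : Type;
  kr : kmor -> kobj;
  ks : kmor -> kobj;
  kid : kobj -> kmor;
  kcomp : kmor -> kmor -> kmor;
  kdeg : kmor -> Nk k;
  kmor_countable : countable [set: kmor];
  kr_id : forall v, kr (kid v) = v;
  ks_id : forall v, ks (kid v) = v;
  kr_comp : forall l m, ks l = kr m -> kr (kcomp l m) = kr l;
  ks_comp : forall l m, ks l = kr m -> ks (kcomp l m) = ks m;
  kcomp_idl : forall l, kcomp (kid (kr l)) l = l;
  kcomp_idr : forall l, kcomp l (kid (ks l)) = l;
  kcompA : forall l m n, ks l = kr m -> ks m = kr n ->
    kcomp l (kcomp m n) = kcomp (kcomp l m) n;
  kdeg_id : forall v, kdeg (kid v) = Nk0 k;
  kdeg_comp : forall l m, ks l = kr m ->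
    kdeg (kcomp l m) = Nkadd (kdeg l) (kdeg m);
  kfactorization : forall l (m n : Nk k), kdeg l = Nkadd m n ->
    exists! p : kmor * kmor,
      [/\ ks p.1 = kr p.2, kdeg p.1 = m, kdeg p.2 = n & kcomp p.1 p.2 = l]
}.

Definition paths_from (k : nat) (L : kgraph k) (v : kobj L) (m : Nk k) :=
  [set l : kmor L | kr l = v /\ kdeg l = m].

Definition row_finite (k : nat) (L : kgraph k) :=
  forall (v : kobj L) m, finite_set (paths_from v m).

Definition source_free (k : nat) (L : kgraph k) :=
  forall (v : kobj L) m, paths_from v m !=set0.

Section L2.
Context {R : realType} {d : measure_display} {X : measurableType d}.
Variable mu : {measure set X -> \bar R}.

Definition cabs2 (z : R[i]) : R := complex.Re z ^+ 2 + complex.Im z ^+ 2.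

Definition cmeasurable (f : X -> R[i]) :=
  measurable_fun setT (fun x => complex.Re (f x)) /\
  measurable_fun setT (fun x => complex.Im (f x)).

Definition L2 (f : X -> R[i]) :=
  cmeasurable f /\ (\int[mu]_x (cabs2 (f x))%:E < +oo)%E.

(* <f, g> = \int f * conj g  dmu *)
Definition inner (f g : X -> R[i]) : R[i] :=
  Complex
    (Rintegral mu setT (fun x => complex.Re (f x) * complex.Re (g x)
                               + complex.Im (f x) * complex.Im (g x)))
    (Rintegral mu setT (fun x => complex.Im (f x) * complex.Re (g x)
                               - complex.Re (f x) * complex.Im (g x))).

Definition ae_zero (f : X -> R[i]) := {ae mu, forall x, f x = 0}.

Definition is_adjoint (T S : (X -> R[i]) -> (X -> R[i])) :=
  forall f g, L2 f -> L2 g -> L2 (S g) /\ inner (T f) g = inner f (S g).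

Definition dense_span (A : set (X -> R[i])) :=
  forall g, L2 g -> forall eps : R, 0 < eps ->
    exists (n : nat) (c : 'I_n -> R[i]) (h : 'I_n -> X -> R[i]),
      (forall i, A (h i)) /\
      (\int[mu]_x (cabs2 (g x - \sum_(i < n) c i * h i x))%:E < eps%:E)%E.

End L2.

Section SBFS.
Context {R : realType} {d : measure_display} {X : measurableType d}.
Variable mu : {measure set X -> \bar R}.
Variables (k : nat) (L : kgraph k).
Variables (D : kmor L -> set X) (tau : kmor L -> X -> X) (coding : Nk k -> X -> X).

Definition Rng (l : kmor L) : set X := tau l @` D l.

Definition sbfs_deg (m : Nk k) :=
  [/\ (forall l, kdeg l = m ->
        [/\ measurable (D l),
            ((0 < mu (D l))%E /\ (mu (D l) < +oo)%E),
            measurable (Rng l),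
            ((0 < mu (Rng l))%E /\ (mu (Rng l) < +oo)%E) &
            measurable_fun (D l) (tau l)]) /\
      measurable_fun setT (coding m),
      mu (~` \bigcup_(l in [set l | kdeg l = m]) Rng l) = 0%E,
      (forall l1 l2, kdeg l1 = m -> kdeg l2 = m -> l1 <> l2 ->
        mu (Rng l1 `&` Rng l2) = 0%E),
      (* Radon-Nikodym derivative of mu o tau_l w.r.t. mu is > 0 a.e. on D l *)
      (forall l, kdeg l = m -> exists Phi : X -> R,
        [/\ measurable_fun (D l) Phi,
            {ae mu, forall x, D l x -> 0 < Phi x} &
            forall A, measurable A -> A `<=` D l ->
              measurable (tau l @` A) /\
              mu (tau l @` A) = (\int[mu]_(x in A) (Phi x)%:E)%E]) &
      (forall l, kdeg l = m -> forall x, D l x -> coding m (tau l x) = x)].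

Definition Lambda_sbfs :=
  [/\ (forall m, sbfs_deg m),
      (forall v x, D (kid v) x -> tau (kid v) x = x),
      (forall l n, ks l = kr n ->
         mu (Rng n `\` D l) = 0%E /\
         {ae mu, forall x, D n x -> tau l (tau n x) = tau (kcomp l n) x}) &
      (forall m n x, coding m (coding n x) = coding (Nkadd m n) x)].

Definition Lambda_projective (f : kmor L -> X -> R[i]) :=
  [/\ Lambda_sbfs,
      (forall l, L2 mu (f l)),
      (forall l, ~ ae_zero mu (f l)),
      (* d(mu o tau_l^{-1})/dmu = |f_l|^2 *)
      (forall l A, measurable A ->
         mu (D l `&` tau l @^-1` A) = (\int[mu]_(x in A) (cabs2 (f l x))%:E)%E) &
      (forall l n, ks l = kr n ->
         {ae mu, forall x, f l x * f n (coding (kdeg l) x) = f (kcomp l n) x})].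

Definition proj_rep (f : kmor L -> X -> R[i]) (l : kmor L) (g : X -> R[i]) :
  X -> R[i] := fun x => f l x * g (coding (kdeg l) x).

End SBFS.

Section Monic.
Context {R : realType} {d : measure_display} {X : measurableType d}.
Variable mu : {measure set X -> \bar R}.
Variable I : Type.
Variable t : I -> (X -> R[i]) -> (X -> R[i]).

Definition monic_vector (xi : X -> R[i]) :=
  L2 mu xi /\
  exists ts : I -> (X -> R[i]) -> (X -> R[i]),
    (forall l, is_adjoint mu (t l) (ts l)) /\
    dense_span mu [set h | exists l, h = t l (ts l xi)].

Definition monic_rep :=
  (forall l, exists g, L2 mu g /\ ~ ae_zero mu (t l g)) /\
  exists xi, monic_vector xi.

End Monic.

From HB Require Import structures.
From mathcomp Require Import all_boot all_order all_algebra.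
From mathcomp Require Import all_classical all_reals all_analysis.
From mathcomp Require Import complex measurable_realfun.
Local Open Scope classical_set_scope.
Local Open Scope ring_scope.
Import Order.TTheory GRing.Theory Num.Theory.

(* Let Z be the zero set of xi and T_l g = f_l (g o tau^{d(l)}).  Because
   mu (D_l `&` tau_l^-1 V) = \int_V |f_l|^2 and tau^{d(l)} o tau_l = id on D_l,
   a function g vanishing a.e. on D_l `&` tau_l^-1 A gives a T_l g vanishing
   a.e. on A.  With A = ~` Z and g = T_l^* xi cut down to D_l `&` tau_l^-1 Z
   this yields |g|^2 = <T_l g, xi> = 0; with A = Z and g = T_l^* xi it shows
   that T_l T_l^* xi vanishes a.e. on Z.  So does every vector of their span,
   and none of them approximates the indicator of a subset of Z of finite
   positive measure, which sigma-finiteness provides unless mu Z = 0. *)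

Set Implicit Arguments.
Unset Strict Implicit.
Unset Printing Implicit Defensive.

Section complex_parts.
Variable R : realType.
Implicit Types x y : R[i].

Lemma ReD x y : complex.Re (x + y) = complex.Re x + complex.Re y.
Proof. by case: x; case: y. Qed.

Lemma ImD x y : complex.Im (x + y) = complex.Im x + complex.Im y.
Proof. by case: x; case: y. Qed.

Lemma ReB x y : complex.Re (x - y) = complex.Re x - complex.Re y.
Proof. by case: x; case: y. Qed.

Lemma ImB x y : complex.Im (x - y) = complex.Im x - complex.Im y.
Proof. by case: x; case: y. Qed.

Lemma ReM x y :
  complex.Re (x * y) = complex.Re x * complex.Re y - complex.Im x * complex.Im y.
Proof. by case: x; case: y. Qed.

Lemma ImM x y :
  complex.Im (x * y) = complex.Re x * complex.Im y + complex.Im x * complex.Re y.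
Proof. by case: x; case: y. Qed.

Lemma cabs2_ge0 x : 0 <= cabs2 x.
Proof. by rewrite /cabs2 addr_ge0 // sqr_ge0. Qed.

Lemma cabs2_eq0 x : cabs2 x = 0 -> x = 0.
Proof.
case: x => a b; rewrite /cabs2 /= => /eqP; rewrite paddr_eq0 ?sqr_ge0 //.
by rewrite !sqrf_eq0 => /andP[/eqP -> /eqP ->].
Qed.

Lemma cabs2_0 : cabs2 (0 : R[i]) = 0.
Proof. by rewrite /cabs2 /= expr0n /= addr0. Qed.

Lemma cabs2_1 : cabs2 (1 : R[i]) = 1.
Proof. by rewrite /cabs2 /= expr1n expr0n /= addr0. Qed.

End complex_parts.

Section complex_measurable.
Context {R : realType} {d : measure_display} {X : measurableType d}.
Implicit Types (f g : X -> R[i]) (A : set X).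

Lemma cmeasurable_add f g :
  cmeasurable f -> cmeasurable g -> cmeasurable (fun x => f x + g x).
Proof.
move=> [mf1 mf2] [mg1 mg2]; split.
- by under eq_fun do rewrite ReD; exact: measurable_funD.
- by under eq_fun do rewrite ImD; exact: measurable_funD.
Qed.

Lemma cmeasurable_sub f g :
  cmeasurable f -> cmeasurable g -> cmeasurable (fun x => f x - g x).
Proof.
move=> [mf1 mf2] [mg1 mg2]; split.
- by under eq_fun do rewrite ReB; exact: measurable_funB.
- by under eq_fun do rewrite ImB; exact: measurable_funB.
Qed.

Lemma cmeasurable_mul f g :
  cmeasurable f -> cmeasurable g -> cmeasurable (fun x => f x * g x).
Proof.
move=> [mf1 mf2] [mg1 mg2]; split.
- by under eq_fun do rewrite ReM; apply: measurable_funB; exact: measurable_funM.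
- by under eq_fun do rewrite ImM; apply: measurable_funD; exact: measurable_funM.
Qed.

Lemma cmeasurable_cst (c : R[i]) : cmeasurable (fun _ : X => c).
Proof. by split; exact: measurable_cst. Qed.

Lemma cmeasurable_comp f (h : X -> X) :
  cmeasurable f -> measurable_fun setT h -> cmeasurable (fun x => f (h x)).
Proof.
by move=> [mf1 mf2] mh; split; [exact: (measurableT_comp mf1)|exact: (measurableT_comp mf2)].
Qed.

Lemma cmeasurable_sum n (F : 'I_n -> X -> R[i]) :
  (forall i, cmeasurable (F i)) -> cmeasurable (fun x => \sum_(i < n) F i x).
Proof.
elim: n F => [|n IHn] F mF.
  by under eq_fun do rewrite big_ord0; exact: cmeasurable_cst.
under eq_fun do rewrite big_ord_recr /=.
by apply: cmeasurable_add => //; exact: (IHn (fun i => F (widen_ord (leqnSn n) i))).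
Qed.

Lemma cmeasurable_restrict A f : measurable A -> cmeasurable f ->
  cmeasurable (fun x => if x \in A then f x else 0).
Proof.
move=> mA [mf1 mf2].
have restrictP (u : X -> R) : measurable_fun setT u ->
    measurable_fun setT (fun x => if x \in A then u x else 0).
  move=> mu; rewrite (_ : (fun x => _) = (fun x => \1_A x * u x)).
    by apply: measurable_funM => //; exact: measurable_indic.
  by apply/funext => x; rewrite /indic; case: (x \in A); rewrite ?mul1r ?mul0r.
split.
- by under eq_fun do rewrite (fun_if (@complex.Re R)); exact: restrictP.
- by under eq_fun do rewrite (fun_if (@complex.Im R)); exact: restrictP.
Qed.

Lemma measurable_cabs2 f : cmeasurable f -> measurable_fun setT (fun x => cabs2 (f x)).
Proof. by move=> [mf1 mf2]; apply: measurable_funD; exact: measurable_funX. Qed.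

Lemma measurable_cabs2E A f :
  cmeasurable f -> measurable_fun A (fun x => (cabs2 (f x))%:E).
Proof. by move=> mf; apply/measurable_funTS/measurable_EFinP; exact: measurable_cabs2. Qed.

Lemma measurable_zero_set f : cmeasurable f -> measurable [set x | f x = 0].
Proof.
move=> [mf1 mf2].
rewrite (_ : [set x | f x = 0] = (fun x => complex.Re (f x)) @^-1` [set 0] `&`
                                 (fun x => complex.Im (f x)) @^-1` [set 0]).
  by apply: measurableI; rewrite -[X in measurable X]setTI;
    [exact: mf1|exact: mf2].
apply/seteqP; split => x /=; first by move=> ->.
by case: (f x) => a b /= [-> ->].
Qed.

End complex_measurable.

Section square_integrals.
Context {R : realType} {d : measure_display} {X : measurableType d}.
Variable mu : {measure set X -> \bar R}.

Lemma integral_cabs2_eq0 V (h : X -> R[i]) : measurable V -> cmeasurable h ->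
  (\int[mu]_(x in V) (cabs2 (h x))%:E = 0)%E -> {ae mu, forall x, V x -> h x = 0}.
Proof.
move=> mV mh int0.
have := (ae_eq_integral_abs mu mV (measurable_cabs2E (A := V) mh)).1.
under eq_integral do rewrite gee0_abs ?lee_fin ?cabs2_ge0 //.
by move=> /(_ int0); apply: filterS => x h0 Vx; apply: cabs2_eq0; case: (h0 Vx).
Qed.

Lemma Rintegral_cabs2_eq0 (h : X -> R[i]) :
  L2 mu h -> Rintegral mu setT (fun x => cabs2 (h x)) = 0 -> {ae mu, forall x, h x = 0}.
Proof.
move=> [mh int_lt] Rint0.
have int_fin : (\int[mu]_x (cabs2 (h x))%:E \is a fin_num)%E.
  by rewrite ge0_fin_numE // integral_ge0 // => x _; rewrite lee_fin cabs2_ge0.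
have int0 : (\int[mu]_x (cabs2 (h x))%:E = 0)%E.
  by rewrite -(fineK int_fin); move: Rint0; rewrite /Rintegral => ->.
by apply: filterS (integral_cabs2_eq0 measurableT mh int0) => x /(_ I).
Qed.

Lemma Rintegral_ae_eq0 (F : X -> R) :
  measurable_fun setT F -> {ae mu, forall x, F x = 0} -> Rintegral mu setT F = 0.
Proof.
move=> mF F0; rewrite /Rintegral (ae_eq_integral (cst 0%E)) ?integral0 //.
- exact/measurable_EFinP.
- by apply: filterS F0 => x /= -> _.
Qed.

End square_integrals.

Section weighted_composition.
Context {R : realType} {d : measure_display} {X : measurableType d}.
Variable mu : {measure set X -> \bar R}.
Variables (D : set X) (tau coding : X -> X) (w : X -> R[i]).
Hypothesis mD : measurable D.
Hypothesis mtau : measurable_fun D tau.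
Hypothesis mcoding : measurable_fun setT coding.
Hypothesis codingK : forall y, D y -> coding (tau y) = y.
Hypothesis mw : cmeasurable w.
Hypothesis w_density : forall A, measurable A ->
  mu (D `&` tau @^-1` A) = (\int[mu]_(x in A) (cabs2 (w x))%:E)%E.

Lemma weight_ae_eq0 V : measurable V ->
  mu (D `&` tau @^-1` V) = 0%E -> {ae mu, forall x, V x -> w x = 0}.
Proof. by move=> mV; rewrite w_density // => /integral_cabs2_eq0; apply. Qed.

Lemma weighted_composition_ae_eq0 A (g : X -> R[i]) : measurable A -> cmeasurable g ->
  {ae mu, forall y, D y -> A (tau y) -> g y = 0} ->
  {ae mu, forall x, A x -> w x * g (coding x) = 0}.
Proof.
move=> mA mg [N [mN N0 gN]].
pose W := A `&` coding @^-1` (~` [set y | g y = 0]).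
have mW : measurable W.
  apply: measurableI => //; rewrite -[X in measurable X]setTI.
  by apply: mcoding => //; apply: measurableC; exact: measurable_zero_set.
have wW : {ae mu, forall x, W x -> w x = 0}.
  apply: weight_ae_eq0 => //; apply: (subset_measure0 _ mN) => //; first exact: mtau.
  by move=> y [Dy [Ay]]; rewrite /= codingK // => gy; apply: gN => /(_ Dy Ay).
apply: filterS wW => x wx Ax.
have [->|gx] := pselect (g (coding x) = 0); first by rewrite mulr0.
by rewrite wx ?mul0r.
Qed.

Lemma adjoint_ae_eq0 (xi s : X -> R[i]) : L2 mu xi -> L2 mu s ->
  (forall g, L2 mu g -> inner mu (fun x => w x * g (coding x)) xi = inner mu g s) ->
  {ae mu, forall y, D y -> xi (tau y) = 0 -> s y = 0}.
Proof.
move=> [mxi _] [ms s_lt] adj.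
pose B := D `&` tau @^-1` [set x | xi x = 0].
have mB : measurable B by apply: mtau => //; exact: measurable_zero_set.
pose g x := if x \in B then s x else 0.
have mg : cmeasurable g by exact: cmeasurable_restrict.
have g_L2 : L2 mu g.
  split => //; apply: le_lt_trans s_lt; apply: ge0_le_integral => //.
  - by move=> x _; rewrite lee_fin cabs2_ge0.
  - exact: measurable_cabs2E.
  - exact: measurable_cabs2E.
  - by move=> x _; rewrite lee_fin /g; case: (x \in B); rewrite ?cabs2_0 ?cabs2_ge0.
have Tg0 : {ae mu, forall x, ~ xi x = 0 -> w x * g (coding x) = 0}.
  apply: weighted_composition_ae_eq0 => //.
    by apply: measurableC; exact: measurable_zero_set.
  by apply: aeW => y Dy xi0; rewrite /g memNset // => -[].
have := congr1 (@complex.Re R) (adj g g_L2); rewrite /inner /=.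
rewrite Rintegral_ae_eq0; last 2 first.
- have [mTg1 mTg2] := cmeasurable_mul mw (cmeasurable_comp mg mcoding).
  by case: mxi => mxi1 mxi2; apply: measurable_funD; exact: measurable_funM.
- apply: filterS Tg0 => x Tgx.
  have [xi0|/Tgx ->] := pselect (xi x = 0); last by rewrite /= !mul0r addr0.
  by rewrite xi0 /= !mulr0 addr0.
move=> int_g.
have : {ae mu, forall x, g x = 0}.
  apply: Rintegral_cabs2_eq0 => //; rewrite int_g; apply: eq_Rintegral => x _.
  by rewrite /g /cabs2; case: (x \in B); rewrite /= !expr2 ?mul0r.
by apply: filterS => x + Dx xi0; rewrite /g mem_set.
Qed.

Lemma weighted_composition_adjoint_ae_eq0 (xi s : X -> R[i]) : L2 mu xi -> L2 mu s ->
  (forall g, L2 mu g -> inner mu (fun x => w x * g (coding x)) xi = inner mu g s) ->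
  {ae mu, forall x, xi x = 0 -> w x * s (coding x) = 0}.
Proof.
move=> xi_L2 s_L2 adj; apply: weighted_composition_ae_eq0.
- by apply: measurable_zero_set; case: xi_L2.
- by case: s_L2.
- exact: adjoint_ae_eq0.
Qed.

End weighted_composition.

Section dense_span_vanishing.
Context {R : realType} {d : measure_display} {X : measurableType d}.
Variable mu : {measure set X -> \bar R}.

Lemma sigma_finite_measure_gt0_subset Z : sigma_finite setT mu -> measurable Z ->
  mu Z <> 0%E -> exists Y, [/\ measurable Y, Y `<=` Z, (0 < mu Y)%E & (mu Y < +oo)%E].
Proof.
move=> [F FT mF] mZ Z0.
have mZF i : measurable (Z `&` F i) by apply: measurableI => //; exact: (mF i).1.
have [i ZFi] : exists i, mu (Z `&` F i) <> 0%E.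
  apply: contrapT => /forallNP ZF0; apply: Z0; apply: measure_negligible => //.
  rewrite -[Z]setIT FT setI_bigcupr; apply: negligible_bigcup => i.
  by apply/negligibleP => //; exact: contrapT (ZF0 i).
exists (Z `&` F i); split; [exact: mZF | exact: subIsetl | |].
  by rewrite lt0e measure_ge0 andbT; exact/eqP.
apply: le_lt_trans (mF i).2; apply: le_measure; rewrite ?inE //; exact: (mF i).1.
Qed.

Lemma measure_le_dist_indic Y n (c : 'I_n -> R[i]) (h : 'I_n -> X -> R[i]) :
  measurable Y -> (forall j, cmeasurable (h j)) ->
  (forall j, {ae mu, forall x, Y x -> h j x = 0}) ->
  (mu Y <= \int[mu]_x
     (cabs2 ((if x \in Y then 1 else 0) - \sum_(j < n) c j * h j x))%:E)%E.
Proof.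
move=> mY mh h0.
pose G x := cabs2 ((if x \in Y then 1 else 0) - \sum_(j < n) c j * h j x).
have mG : measurable_fun setT (fun x => (G x)%:E).
  apply: measurable_cabs2E; apply: cmeasurable_sub.
    by apply: cmeasurable_restrict => //; exact: cmeasurable_cst.
  by apply: cmeasurable_sum => j; apply: cmeasurable_mul => //; exact: cmeasurable_cst.
have G1 : (\int[mu]_(x in Y) (G x)%:E = \int[mu]_(x in Y) (cst 1%E) x)%E.
  apply: ae_eq_integral => //; first exact: measurable_funTS.
  have : {ae mu, forall x, forall j, Y x -> h j x = 0} by apply: filter_forall.
  apply: filterS => x hx0 Yx.
  by rewrite /G big1 => [|j _]; rewrite ?hx0 ?mulr0 // subr0 mem_set // cabs2_1.
rewrite -[mu Y]mul1e -integral_cst // -G1.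
by apply: ge0_subset_integral => // x _; rewrite lee_fin cabs2_ge0.
Qed.

Lemma dense_span_vanishing_null (A : set (X -> R[i])) Z :
  sigma_finite setT mu -> measurable Z ->
  (forall h, A h -> cmeasurable h /\ {ae mu, forall x, Z x -> h x = 0}) ->
  dense_span mu A -> mu Z = 0%E.
Proof.
move=> mu_sfin mZ A0 A_dense; apply: contrapT => Z0.
have [Y [mY YZ Y_gt0 Y_fin]] := sigma_finite_measure_gt0_subset mu_sfin mZ Z0.
pose indY x := if x \in Y then (1 : R[i]) else 0.
have indY_L2 : L2 mu indY.
  split; first by apply: cmeasurable_restrict => //; exact: cmeasurable_cst.
  rewrite (eq_integral (fun x => (\1_Y x)%:E)) ?integral_indic ?setIT //.
  by move=> x _; rewrite /indY /indic; case: (x \in Y); rewrite ?cabs2_1 ?cabs2_0.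
have Y_fine_gt0 : 0 < fine (mu Y) by apply: fine_gt0; rewrite Y_gt0 Y_fin.
have [n [c [h [Ah dist_lt]]]] := A_dense indY indY_L2 _ Y_fine_gt0.
have h0 j : {ae mu, forall x, Y x -> h j x = 0}.
  by move: (A0 _ (Ah j)).2; apply: filterS => x hx0 /YZ.
have := le_lt_trans (measure_le_dist_indic c mY (fun j => (A0 _ (Ah j)).1) h0) dist_lt.
by rewrite fineK ?ge0_fin_numE ?Y_fin // ltxx.
Qed.

End dense_span_vanishing.

Unset Implicit Arguments.

Theorem proposition3p5 (k : nat) (L : kgraph k)
  (R : realType) (d : measure_display) (X : measurableType d)
  (mu : {measure set X -> \bar R})
  (D : kmor L -> set X) (tau : kmor L -> X -> X) (coding : Nk k -> X -> X)
  (f : kmor L -> X -> R[i]) (xi : X -> R[i]) :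
  row_finite L -> source_free L ->
  sigma_finite setT mu ->
  Lambda_projective mu D tau coding f ->
  monic_rep mu (proj_rep coding f) ->
  monic_vector mu (proj_rep coding f) xi ->
  mu [set x | xi x = 0] = 0%E.
Proof.
move=> _ _ mu_sfin [[sbfs _ _ _] f_L2 _ f_density _] _ [xi_L2 [ts [ts_adj xi_dense]]].
apply: (dense_span_vanishing_null mu_sfin _ _ xi_dense).
  by apply: measurable_zero_set; case: xi_L2.
move=> _ [l ->]; have [[sbfs_l mcoding] _ _ _ codingK] := sbfs (kdeg l).
have [mD _ _ _ mtau] := sbfs_l l erefl.
have [s_L2 _] := ts_adj l xi xi xi_L2 xi_L2.
split.
  apply: cmeasurable_mul; first by case: (f_L2 l).
  by apply: cmeasurable_comp => //; case: s_L2.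
apply: (weighted_composition_adjoint_ae_eq0 mD mtau mcoding (codingK l erefl)) => //.
- by case: (f_L2 l).
- exact: f_density.
- by move=> g g_L2; exact: (ts_adj l g xi g_L2 xi_L2).2.
Qed.
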